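(* Let $\mathcal{C}$ be a stable M-category with a terminal object $1$ and limits of chains. Let $B\colon\mathcal{C}^{op}\times\mathcal{C}\to\mathcal{C}$ be a bifunctor such that (1) $B$ is locally contractive in the first argument and locally non-expansive in the second argument; (2) the hom-set $\mathcal{C}(1,B(1,1))$ is inhabited; (3) for each object $X$ the final sequence of the endofunctor $B(X,-)$ converges. Then $B$ has a locally final coalgebra, i.e. a morphism $z\colon Z\to B(Z,Z)$ such that $(Z,z)$ is a final coalgebra of the endofunctor $B(Z,-)$. If moreover all hom-sets of $\mathcal{C}$ are inhabited, this locally final coalgebra is unique up to isomorphism.
   Context: An ultrametric space is a metric space $(X,d)$ with $d(x,z)\le\max(d(x,y),d(y,z))$; it is 1-bounded if $d\le 1$. A map $f$ between metric spaces is non-expansive if $d(f(x),f(y))\le d(x,y)$. An M-category is a category in which every hom-set $\mathcal{C}(A,B)$ carries a complete, 1-bounded ultrametric $d$ such that composition $\mathcal{C}(B,C)\times\mathcal{C}(A,B)\to\mathcal{C}(A,C)$ is non-expansive (product metric $=\max$). It is stable if for all parallel $f,g\colon A\to B$ and every inhabited jointly monic family $h_i\colon B\to C_i$ ($i\in I$) one has $d(f,g)=\sup_{i\in I}d(h_i\cdot f,h_i\cdot g)$. ''Limits of chains'' means limits of all $\alpha^{op}$-chains for all ordinals $\alpha$. $B$ is locally contractive in the first argument if there is $c\in[0,1)$ such that $d(B(f,\mathrm{id}_Y),B(g,\mathrm{id}_Y))\le c\cdot d(f,g)$ for all objects $Y$ and all $f,g\colon X\to X'$; locally non-expansive in the second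 argument if $d(B(\mathrm{id}_X,f),B(\mathrm{id}_X,g))\le d(f,g)$ for all $X$ and $f,g\colon Y\to Y'$. The final sequence of an endofunctor $H$ is the diagram $(D_\alpha)$ indexed by ordinals (with connecting maps $D_{\alpha,\beta}\colon D_\alpha\to D_\beta$, $\beta\le\alpha$) given by $D_0=1$, $D_{\alpha+1}=HD_\alpha$, $D_{1,0}$ the unique map, $D_{\alpha+1,\beta+1}=HD_{\alpha,\beta}$, and $D_\alpha=\lim_{\beta<\alpha}D_\beta$ for limit ordinals $\alpha$; it converges if $D_{\alpha+1,\alpha}$ is an isomorphism for some ordinal $\alpha$. *)

From Stdlib Require Import Reals.
Open Scope R_scope.
Unset Implicit Arguments.

Record Category := {
  Ob :> Type;
  hom : Ob -> Ob -> Type;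
  idm : forall X, hom X X;
  cmp : forall X Y Z, hom Y Z -> hom X Y -> hom X Z;
  comp_idl : forall X Y (f : hom X Y), cmp X Y Y (idm Y) f = f;
  comp_idr : forall X Y (f : hom X Y), cmp X X Y f (idm X) = f;
  comp_assoc : forall X Y Z W (h : hom Z W) (g : hom Y Z) (f : hom X Y),
      cmp X Z W h (cmp X Y Z g f) = cmp X Y W (cmp Y Z W h g) f
}.
Arguments hom {c} X Y.
Arguments Ob c : clear implicits.
Arguments idm {c} X.
Arguments cmp {c X Y Z} g f.

Definition IsIso {C : Category} {X Y : C} (f : hom X Y) : Prop :=
  exists g : hom Y X, cmp g f = idm X /\ cmp f g = idm Y.

Definition IsTerminal {C : Category} (T : C) : Prop :=
  (forall X : C, inhabited (hom X T)) /\ (forall X (f g : hom X T), f = g).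

Definition JointlyMonic {C : Category} {B : C} {I : Type} (Ci : I -> C)
  (h : forall i, hom B (Ci i)) : Prop :=
  forall (A : C) (u v : hom A B), (forall i, cmp (h i) u = cmp (h i) v) -> u = v.

Definition IsUltrametric (T : Type) (d : T -> T -> R) : Prop :=
  (forall x y, 0 <= d x y <= 1) /\
  (forall x y, d x y = 0 <-> x = y) /\
  (forall x y, d x y = d y x) /\
  (forall x y z, d x z <= Rmax (d x y) (d y z)).

Definition IsCauchy (T : Type) (d : T -> T -> R) (s : nat -> T) : Prop :=
  forall eps, 0 < eps -> exists N, forall m n, (N <= m)%nat -> (N <= n)%nat ->
    d (s m) (s n) < eps.

Definition ConvergesTo (T : Type) (d : T -> T -> R) (s : nat -> T) (l : T) : Prop :=
  forall eps, 0 < eps -> exists N, forall n, (N <= n)%nat -> d (s n) l < eps.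

Definition IsComplete (T : Type) (d : T -> T -> R) : Prop :=
  forall s, IsCauchy T d s -> exists l, ConvergesTo T d s l.

Record MCategory := {
  mcat :> Category;
  mdist : forall X Y : mcat, hom X Y -> hom X Y -> R;
  mdist_ultra : forall X Y : mcat, IsUltrametric (hom X Y) (mdist X Y);
  mdist_complete : forall X Y : mcat, IsComplete (hom X Y) (mdist X Y);
  mdist_comp_nonexp : forall (X Y Z : mcat) (g g' : hom Y Z) (f f' : hom X Y),
      mdist X Z (cmp g f) (cmp g' f') <= Rmax (mdist Y Z g g') (mdist X Y f f')
}.
Arguments mdist {m X Y} f g.

Definition IsStable (C : MCategory) : Prop :=
  forall (A B : C) (f g : hom A B) (I : Type) (Ci : I -> C) (h : forall i, hom B (Ci i)),
    inhabited I -> @JointlyMonic C B I Ci h ->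
    is_lub (fun r => exists i, r = mdist (cmp (h i) f) (cmp (h i) g)) (mdist f g).

(** * Well-orders (representing ordinals) and chains *)
Record WellOrder := {
  wo_car :> Type;
  wo_lt : wo_car -> wo_car -> Prop;
  wo_wf : well_founded wo_lt;
  wo_trans : forall x y z, wo_lt x y -> wo_lt y z -> wo_lt x z;
  wo_total : forall x y, wo_lt x y \/ x = y \/ wo_lt y x
}.
Arguments wo_lt {w} x y.

Definition wo_le {W : WellOrder} (x y : W) : Prop := wo_lt x y \/ x = y.

Definition IsChain {C : Category} (W : WellOrder) (D : W -> C)
  (Dm : forall a b : W, wo_le b a -> hom (D a) (D b)) : Prop :=
  (forall a (p : wo_le a a), Dm a a p = idm (D a)) /\
  (forall a b c (p : wo_le b a) (q : wo_le c b) (r : wo_le c a),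
      cmp (Dm b c q) (Dm a b p) = Dm a c r).

Definition IsLimitOfChain {C : Category} (W : WellOrder) (D : W -> C)
  (Dm : forall a b : W, wo_le b a -> hom (D a) (D b)) (L : C)
  (pi : forall a, hom L (D a)) : Prop :=
  (forall a b (p : wo_le b a), cmp (Dm a b p) (pi a) = pi b) /\
  (forall (A : C) (c : forall a, hom A (D a)),
      (forall a b (p : wo_le b a), cmp (Dm a b p) (c a) = c b) ->
      exists u : hom A L, (forall a, cmp (pi a) u = c a) /\
        (forall u' : hom A L, (forall a, cmp (pi a) u' = c a) -> u' = u)).

Definition HasChainLimits (C : Category) : Prop :=
  forall (W : WellOrder) (D : W -> C) (Dm : forall a b : W, wo_le b a -> hom (D a) (D b)),
    IsChain W D Dm -> exists (L : C) (pi : forall a, hom L (D a)), IsLimitOfChain W D Dm L pi.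

Definition IsBifunctor {C : Category} (B0 : C -> C -> C)
  (B1 : forall X X' Y Y' : C, hom X' X -> hom Y Y' -> hom (B0 X Y) (B0 X' Y')) : Prop :=
  (forall X Y : C, B1 X X Y Y (idm X) (idm Y) = idm (B0 X Y)) /\
  (forall (X X' X'' Y Y' Y'' : C) (f : hom X' X) (f' : hom X'' X')
          (g : hom Y Y') (g' : hom Y' Y''),
      B1 X X'' Y Y'' (cmp f f') (cmp g' g) = cmp (B1 X' X'' Y' Y'' f' g') (B1 X X' Y Y' f g)).

Definition LocContractiveFst {C : MCategory} (B0 : C -> C -> C)
  (B1 : forall X X' Y Y' : C, hom X' X -> hom Y Y' -> hom (B0 X Y) (B0 X' Y')) : Prop :=
  exists c : R, 0 <= c < 1 /\
    forall (X X' Y : C) (f g : hom X X'),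
      mdist (B1 X' X Y Y f (idm Y)) (B1 X' X Y Y g (idm Y)) <= c * mdist f g.

Definition LocNonExpansiveSnd {C : MCategory} (B0 : C -> C -> C)
  (B1 : forall X X' Y Y' : C, hom X' X -> hom Y Y' -> hom (B0 X Y) (B0 X' Y')) : Prop :=
  forall (X Y Y' : C) (f g : hom Y Y'),
    mdist (B1 X X Y Y' (idm X) f) (B1 X X Y Y' (idm X) g) <= mdist f g.

Definition hcast {C : Category} {X X' Y Y' : C} (e1 : X = X') (e2 : Y = Y')
  (f : hom X Y) : hom X' Y' :=
  match e1 in _ = X1, e2 in _ = Y1 return hom X1 Y1 with
  | eq_refl, eq_refl => f end.

Definition wo_is_min {W : WellOrder} (a : W) : Prop := forall b, ~ wo_lt b a.
(* a is the successor of b *)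
Definition wo_is_succ {W : WellOrder} (b a : W) : Prop :=
  wo_lt b a /\ forall c, wo_lt b c -> wo_lt c a -> False.
Definition wo_is_limit {W : WellOrder} (a : W) : Prop :=
  ~ wo_is_min a /\ forall b, ~ wo_is_succ b a.

Definition IsLimitBelow {C : Category} (W : WellOrder) (D : W -> C)
  (Dm : forall a b : W, wo_le b a -> hom (D a) (D b)) (a : W) : Prop :=
  forall (A : C) (c : forall b, wo_lt b a -> hom A (D b)),
    (forall b b' (hb : wo_lt b a) (hb' : wo_lt b' a) (p : wo_le b' b),
        cmp (Dm b b' p) (c b hb) = c b' hb') ->
    exists u : hom A (D a),
      (forall b (hb : wo_lt b a), cmp (Dm a b (or_introl hb)) u = c b hb) /\
      (forall u' : hom A (D a),
          (forall b (hb : wo_lt b a), cmp (Dm a b (or_introl hb)) u' = c b hb) -> u' = u).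

(** (D, Dm) is the final sequence of H restricted to the ordinals below the
    order type of W (for some choice of terminal object and limits). *)
Definition IsFinalSeqOn {C : Category} (H0 : C -> C)
  (H1 : forall Y Y' : C, hom Y Y' -> hom (H0 Y) (H0 Y'))
  (W : WellOrder) (D : W -> C) (Dm : forall a b : W, wo_le b a -> hom (D a) (D b)) : Prop :=
  IsChain W D Dm /\
  (forall a, wo_is_min a -> IsTerminal (D a)) /\
  (exists se : forall a b : W, wo_is_succ b a -> D a = H0 (D b),
     forall a a' b b' (sa : wo_is_succ a a') (sb : wo_is_succ b b')
            (p : wo_le b' a') (q : wo_le b a),
       hcast (se a' a sa) (se b' b sb) (Dm a' b' p) = H1 (D a) (D b) (Dm a b q)) /\
  (forall a, wo_is_limit a -> IsLimitBelow W D Dm a).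

Definition FinalSeqConverges {C : Category} (H0 : C -> C)
  (H1 : forall Y Y' : C, hom Y Y' -> hom (H0 Y) (H0 Y')) : Prop :=
  exists (W : WellOrder) (D : W -> C) (Dm : forall a b : W, wo_le b a -> hom (D a) (D b)),
    IsFinalSeqOn H0 H1 W D Dm /\
    exists (a a' : W) (sa : wo_is_succ a a'), IsIso (Dm a' a (or_introl (proj1 sa))).

Definition IsFinalCoalgebra {C : Category} (H0 : C -> C)
  (H1 : forall Y Y' : C, hom Y Y' -> hom (H0 Y) (H0 Y')) (Z : C) (z : hom Z (H0 Z)) : Prop :=
  forall (A : C) (a : hom A (H0 A)),
    exists h : hom A Z, cmp z h = cmp (H1 A Z h) a /\
      (forall h' : hom A Z, cmp z h' = cmp (H1 A Z h') a -> h' = h).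

Definition BFix {C : Category} (B0 : C -> C -> C)
  (B1 : forall X X' Y Y' : C, hom X' X -> hom Y Y' -> hom (B0 X Y) (B0 X' Y')) (X : C) :
  forall Y Y' : C, hom Y Y' -> hom (B0 X Y) (B0 X Y') :=
  fun Y Y' g => B1 X X Y Y' (idm X) g.

Definition IsLocallyFinalCoalgebra {C : Category} (B0 : C -> C -> C)
  (B1 : forall X X' Y Y' : C, hom X' X -> hom Y Y' -> hom (B0 X Y) (B0 X' Y'))
  (Z : C) (z : hom Z (B0 Z Z)) : Prop :=
  IsFinalCoalgebra (B0 Z) (BFix B0 B1 Z) Z z.

From Stdlib Require Import Reals Lra Lia ProofIrrelevance Classical ClassicalEpsilon.
Open Scope R_scope.

(* For each object X, the converging final sequence of B(X,-) yields a final coalgebra F X.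
   Stability makes an induction along the final sequence possible at limit stages; it shows
   that F X is even non-expansively final: the coalgebra morphism into it depends
   non-expansively on the coalgebra structure.  Reindexing along B(f,-) then makes F a
   contravariant functor which is locally contractive, because B is contractive in its first
   argument.  The chain T <- F T <- F (F T) <- ..., started from a map T -> F T given by the
   element of C(1, B(1,1)), has a limit L; stability and contractivity make L isomorphic to
   F L, and transporting the final coalgebra F L along this isomorphism gives the locally final
   coalgebra.  Two locally final coalgebras Z, Z' induce contractions C(Z',Z) -> C(Z,Z') ->
   C(Z',Z) by reindexing; the Banach fixed point and its image are mutually inverse, since
   every endomorphism of a locally final coalgebra compatible with its structure is the
   identity. *)

Section HomUltrametric.
Variable C : MCategory.

Lemma mdist_ge0 (X Y : C) (f g : hom X Y) : 0 <= mdist f g.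
Proof. destruct (mdist_ultra C X Y) as [H _]. apply H. Qed.

Lemma mdist_le1 (X Y : C) (f g : hom X Y) : mdist f g <= 1.
Proof. destruct (mdist_ultra C X Y) as [H _]. apply H. Qed.

Lemma mdist_xx (X Y : C) (f : hom X Y) : mdist f f = 0.
Proof. destruct (mdist_ultra C X Y) as [_ [H _]]. apply H; reflexivity. Qed.

Lemma mdist_le0_eq (X Y : C) (f g : hom X Y) : mdist f g <= 0 -> f = g.
Proof.
  destruct (mdist_ultra C X Y) as [_ [H _]]. intros Hle.
  apply H. pose proof (mdist_ge0 X Y f g). lra.
Qed.

Lemma mdist_sym (X Y : C) (f g : hom X Y) : mdist f g = mdist g f.
Proof. destruct (mdist_ultra C X Y) as [_ [_ [H _]]]. apply H. Qed.

Lemma mdist_trans_le (X Y : C) (f g h : hom X Y) r :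
  mdist f g <= r -> mdist g h <= r -> mdist f h <= r.
Proof.
  destruct (mdist_ultra C X Y) as [_ [_ [_ H]]]. intros Hfg Hgh.
  eapply Rle_trans; [apply (H f g h) | apply Rmax_lub; assumption].
Qed.

Lemma cmp_mdist_le (X Y Z : C) (g g' : hom Y Z) (f f' : hom X Y) r :
  mdist g g' <= r -> mdist f f' <= r -> mdist (cmp g f) (cmp g' f') <= r.
Proof.
  intros Hg Hf. eapply Rle_trans; [apply mdist_comp_nonexp | apply Rmax_lub; assumption].
Qed.

Lemma cmp_mdist_l (X Y Z : C) (g g' : hom Y Z) (f : hom X Y) :
  mdist (cmp g f) (cmp g' f) <= mdist g g'.
Proof. apply cmp_mdist_le; [lra | rewrite mdist_xx; apply mdist_ge0]. Qed.

Lemma cmp_mdist_r (X Y Z : C) (g : hom Y Z) (f f' : hom X Y) :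
  mdist (cmp g f) (cmp g f') <= mdist f f'.
Proof. apply cmp_mdist_le; [rewrite mdist_xx; apply mdist_ge0 | lra]. Qed.

End HomUltrametric.

Lemma pow_le_decr (c : R) m n : 0 <= c <= 1 -> (m <= n)%nat -> c ^ n <= c ^ m.
Proof.
  intros Hc Hmn. induction Hmn as [|n _ IH]; [lra|].
  simpl. pose proof (pow_le c n (proj1 Hc)). nra.
Qed.

Lemma Rmult_contract_le (c x : R) : 0 <= c < 1 -> 0 <= x -> c * x <= x.
Proof. intros Hc Hx. nra. Qed.

Lemma pow_lt_eventually (c : R) : 0 <= c < 1 ->
  forall eps, 0 < eps -> exists N, forall n, (N <= n)%nat -> c ^ n < eps.
Proof.
  intros Hc eps Heps. destruct (pow_lt_1_zero c) with (y := eps) as [N HN];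
    [rewrite Rabs_pos_eq; lra | assumption |].
  exists N. intros n Hn. specialize (HN n Hn).
  rewrite Rabs_pos_eq in HN; [assumption | apply pow_le; lra].
Qed.

Lemma le_pow_eventually_le0 (c x : R) N : 0 <= c < 1 ->
  (forall n, (N <= n)%nat -> x <= c ^ n) -> x <= 0.
Proof.
  intros Hc H. destruct (Rle_or_lt x 0) as [|Hx]; [assumption|].
  destruct (pow_lt_eventually c Hc x Hx) as [M HM].
  specialize (HM (Nat.max N M) ltac:(lia)). specialize (H (Nat.max N M) ltac:(lia)). lra.
Qed.

Section GeometricLimits.
Variables (C : MCategory) (X Y : C) (c : R).
Hypothesis Hc : 0 <= c < 1.

Lemma mdist_geometric_le (s : nat -> hom X Y) :
  (forall n, mdist (s n) (s (S n)) <= c ^ n) ->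
  forall m n, (m <= n)%nat -> mdist (s m) (s n) <= c ^ m.
Proof.
  intros Hs m n Hmn. induction Hmn as [|n Hmn IH]; [rewrite mdist_xx; apply pow_le; lra|].
  apply mdist_trans_le with (g := s n); [assumption|].
  eapply Rle_trans; [apply Hs | apply pow_le_decr; [lra | assumption]].
Qed.

Lemma geometric_limit_exists (s : nat -> hom X Y) :
  (forall n, mdist (s n) (s (S n)) <= c ^ n) ->
  exists l, forall n, mdist (s n) l <= c ^ n.
Proof.
  intros Hs. destruct (mdist_complete C X Y s) as [l Hl].
  { intros eps Heps. destruct (pow_lt_eventually c Hc eps Heps) as [N HN].
    exists N. intros m n Hm Hn. destruct (Nat.le_ge_cases m n).
    - eapply Rle_lt_trans; [apply mdist_geometric_le | apply HN]; assumption.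
    - rewrite mdist_sym.
      eapply Rle_lt_trans; [apply mdist_geometric_le | apply HN]; assumption. }
  exists l. intros n.
  assert (Hclose : forall eps, 0 < eps -> mdist (s n) l <= c ^ n + eps).
  { intros eps Heps. destruct (Hl eps Heps) as [N HN].
    pose proof (mdist_geometric_le s Hs n (Nat.max n N) (Nat.le_max_l _ _)).
    pose proof (HN (Nat.max n N) (Nat.le_max_r _ _)). pose proof (pow_le c n (proj1 Hc)).
    apply mdist_trans_le with (g := s (Nat.max n N)); lra. }
  destruct (Rle_or_lt (mdist (s n) l) (c ^ n)) as [|Hlt]; [assumption|].
  specialize (Hclose ((mdist (s n) l - c ^ n) / 2) ltac:(lra)). lra.
Qed.

Lemma geometric_limit_unique (s : nat -> hom X Y) l1 l2 N :
  (forall n, (N <= n)%nat -> mdist (s n) l1 <= c ^ n) ->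
  (forall n, (N <= n)%nat -> mdist (s n) l2 <= c ^ n) -> l1 = l2.
Proof.
  intros H1 H2. apply mdist_le0_eq, (le_pow_eventually_le0 c _ N Hc). intros n Hn.
  apply mdist_trans_le with (g := s n); [rewrite mdist_sym|]; auto.
Qed.

Lemma contraction_fixpoint (G : hom X Y -> hom X Y) :
  (forall f g, mdist (G f) (G g) <= c * mdist f g) -> hom X Y -> exists f, G f = f.
Proof.
  intros HG f0. set (s := fun n => Nat.iter n G f0).
  assert (Hs : forall n, mdist (s n) (s (S n)) <= c ^ n).
  { induction n as [|n IH]; [apply mdist_le1|].
    eapply Rle_trans; [apply HG | apply Rmult_le_compat_l; [lra | exact IH]]. }
  destruct (geometric_limit_exists s Hs) as [l Hl].
  exists l. apply (geometric_limit_unique s _ _ 1); [|intros; apply Hl].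
  intros [|n] Hn; [lia|].
  eapply Rle_trans; [apply HG | apply Rmult_le_compat_l; [lra | apply Hl]].
Qed.

End GeometricLimits.

Definition eq_hom {C : Category} {X Y : C} (e : X = Y) : hom X Y := hcast eq_refl e (idm X).

Lemma hcast_eq_hom {C : Category} {X X' Y Y' : C} (e1 : X = X') (e2 : Y = Y') (f : hom X Y) :
  hcast e1 e2 f = cmp (eq_hom e2) (cmp f (eq_hom (eq_sym e1))).
Proof. destruct e1, e2. unfold eq_hom; simpl. rewrite comp_idl, comp_idr. reflexivity. Qed.

Lemma eq_hom_symK {C : Category} {X Y : C} (e : X = Y) : cmp (eq_hom (eq_sym e)) (eq_hom e) = idm X.
Proof. destruct e. apply comp_idl. Qed.

Lemma eq_hom_Ksym {C : Category} {X Y : C} (e : X = Y) : cmp (eq_hom e) (eq_hom (eq_sym e)) = idm Y.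
Proof. destruct e. apply comp_idl. Qed.

Section WellOrders.
Variable W : WellOrder.

Lemma wo_lt_irrefl (x : W) : ~ wo_lt x x.
Proof. intro H. induction (wo_wf W x) as [x _ IH]. eapply IH; eauto. Qed.

Lemma wo_lt_asym (x y : W) : wo_lt x y -> wo_lt y x -> False.
Proof. intros. apply (wo_lt_irrefl x). eapply wo_trans; eauto. Qed.

Lemma wo_le_refl (x : W) : wo_le x x.
Proof. right; reflexivity. Qed.

Lemma wo_le_trans (x y z : W) : wo_le x y -> wo_le y z -> wo_le x z.
Proof. intros [H|H] [H'|H']; subst; unfold wo_le; auto. left; eapply wo_trans; eauto. Qed.

Lemma wo_lt_le_trans (x y z : W) : wo_lt x y -> wo_le y z -> wo_lt x z.
Proof. intros H [H'|H']; subst; auto. eapply wo_trans; eauto. Qed.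

Lemma wo_lt_succ (b0 b x : W) : wo_is_succ b0 b -> wo_lt x b -> wo_le x b0.
Proof.
  intros [_ Hgap] Hx. destruct (wo_total W x b0) as [H|[H|H]]; unfold wo_le; auto.
  exfalso; eapply Hgap; eauto.
Qed.

Lemma wo_succ_unique (b0 b1 b : W) : wo_is_succ b0 b -> wo_is_succ b1 b -> b0 = b1.
Proof.
  intros H0 H1.
  destruct (wo_lt_succ b0 b b1 H0 (proj1 H1)) as [H|H]; auto.
  destruct (wo_lt_succ b1 b b0 H1 (proj1 H0)) as [H'|H']; auto.
  exfalso; eapply wo_lt_asym; eauto.
Qed.

Lemma wo_cases (b : W) : wo_is_min b \/ (exists b0, wo_is_succ b0 b) \/ wo_is_limit b.
Proof.
  destruct (classic (wo_is_min b)) as [|Hmin]; auto.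
  destruct (classic (exists b0, wo_is_succ b0 b)) as [|Hsucc]; auto.
  right; right. split; [assumption|]. intros b0 Hs. apply Hsucc; eauto.
Qed.

Lemma wo_not_min_lt (b : W) : ~ wo_is_min b -> exists b0, wo_lt b0 b.
Proof. intros H. apply NNPP. intro H'. apply H. intros b0 Hb. apply H'; eauto. Qed.

End WellOrders.
Definition IsNonexpFinal {C : MCategory} (H0 : C -> C)
  (H1 : forall Y Y' : C, hom Y Y' -> hom (H0 Y) (H0 Y')) (Z : C) (z : hom Z (H0 Z)) : Prop :=
  (forall (A : C) (a : hom A (H0 A)), exists h, cmp z h = cmp (H1 A Z h) a) /\
  (forall (A : C) (a1 a2 : hom A (H0 A)) (h1 h2 : hom A Z),
      cmp z h1 = cmp (H1 A Z h1) a1 -> cmp z h2 = cmp (H1 A Z h2) a2 ->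
      mdist h1 h2 <= mdist a1 a2).

Section FinalCoalgebras.
Variable C : MCategory.
Variables (H0 : C -> C) (H1 : forall Y Y' : C, hom Y Y' -> hom (H0 Y) (H0 Y')).
Hypothesis H1id : forall Y, H1 Y Y (idm Y) = idm (H0 Y).
Hypothesis H1cmp : forall (Y Y' Y'' : C) (f : hom Y Y') (g : hom Y' Y''),
  H1 Y Y'' (cmp g f) = cmp (H1 Y' Y'' g) (H1 Y Y' f).

Lemma nonexp_final_unique (Z : C) (z : hom Z (H0 Z)) (A : C) (a : hom A (H0 A)) (h1 h2 : hom A Z) :
  IsNonexpFinal H0 H1 Z z ->
  cmp z h1 = cmp (H1 A Z h1) a -> cmp z h2 = cmp (H1 A Z h2) a -> h1 = h2.
Proof.
  intros [_ Hne] E1 E2. apply mdist_le0_eq.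
  rewrite <- (mdist_xx C _ _ a). exact (Hne A a a h1 h2 E1 E2).
Qed.

Lemma nonexp_final_final (Z : C) (z : hom Z (H0 Z)) :
  IsNonexpFinal H0 H1 Z z -> IsFinalCoalgebra H0 H1 Z z.
Proof.
  intros HZ A a. destruct (proj1 HZ A a) as [h Hh].
  exists h. split; [exact Hh|]. intros h' Hh'. exact (nonexp_final_unique Z z A a h' h HZ Hh' Hh).
Qed.

Lemma final_coalgebra_retract (Z : C) (z : hom Z (H0 Z)) (Y : C) (y : hom Y (H0 Y))
  (k : hom Z Y) (k' : hom Y Z) :
  IsFinalCoalgebra H0 H1 Z z ->
  cmp y k = cmp (H1 Z Y k) z -> cmp z k' = cmp (H1 Y Z k') y -> cmp k' k = idm Z.
Proof.
  intros Hfin Hk Hk'. destruct (Hfin Z z) as [u [_ Hu]].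
  rewrite (Hu (idm Z)); [apply Hu|].
  - rewrite comp_assoc, Hk', <- comp_assoc, Hk, comp_assoc, H1cmp. reflexivity.
  - rewrite comp_idr, H1id, comp_idl. reflexivity.
Qed.

(* A final coalgebra is a retract of a non-expansively final one, and composing with the
   non-expansive retraction transfers the estimate. *)
Lemma final_nonexp_final (Z : C) (z : hom Z (H0 Z)) :
  (exists (Y : C) (y : hom Y (H0 Y)), IsNonexpFinal H0 H1 Y y) ->
  IsFinalCoalgebra H0 H1 Z z -> IsNonexpFinal H0 H1 Z z.
Proof.
  intros [Y [y HY]] Hfin.
  destruct (proj1 HY Z z) as [k Hk]. destruct (Hfin Y y) as [k' [Hk' _]].
  pose proof (final_coalgebra_retract Z z Y y k k' Hfin Hk Hk') as Hkk.
  split.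
  - intros A a. destruct (Hfin A a) as [h [Hh _]]. eauto.
  - intros A a1 a2 h1 h2 E1 E2.
    rewrite <- (comp_idl _ _ _ h1), <- (comp_idl _ _ _ h2), <- Hkk, <- !comp_assoc.
    eapply Rle_trans; [apply cmp_mdist_r | apply (proj2 HY A a1 a2)].
    + rewrite comp_assoc, Hk, <- comp_assoc, E1, comp_assoc, H1cmp. reflexivity.
    + rewrite comp_assoc, Hk, <- comp_assoc, E2, comp_assoc, H1cmp. reflexivity.
Qed.

Lemma final_coalgebra_transport (Z Z' : C) (z : hom Z (H0 Z)) (i : hom Z Z') (j : hom Z' Z) :
  cmp j i = idm Z -> cmp i j = idm Z' ->
  IsFinalCoalgebra H0 H1 Z z -> IsFinalCoalgebra H0 H1 Z' (cmp (H1 Z Z' i) (cmp z j)).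
Proof.
  intros Hji Hij Hfin A a. destruct (Hfin A a) as [h [Hh Huniq]].
  exists (cmp i h). split.
  - rewrite <- !comp_assoc, (comp_assoc _ _ _ _ _ j i h), Hji, comp_idl, Hh.
    rewrite comp_assoc, <- H1cmp. reflexivity.
  - intros h' Hh'. rewrite <- (comp_idl _ _ _ h'), <- Hij, <- comp_assoc. f_equal.
    apply Huniq. transitivity (cmp (H1 Z' Z j) (cmp (cmp (H1 Z Z' i) (cmp z j)) h')).
    + rewrite !comp_assoc, <- H1cmp, Hji, H1id, comp_idl. reflexivity.
    + rewrite Hh', comp_assoc, <- H1cmp. reflexivity.
Qed.

End FinalCoalgebras.

Section FinalSequence.
Variable C : MCategory.
Hypothesis Hstab : IsStable C.
Variables (H0 : C -> C) (H1 : forall Y Y' : C, hom Y Y' -> hom (H0 Y) (H0 Y')).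
Hypothesis H1cmp : forall (Y Y' Y'' : C) (f : hom Y Y') (g : hom Y' Y''),
  H1 Y Y'' (cmp g f) = cmp (H1 Y' Y'' g) (H1 Y Y' f).
Hypothesis H1ne : forall (Y Y' : C) (f g : hom Y Y'), mdist (H1 Y Y' f) (H1 Y Y' g) <= mdist f g.
Variables (W : WellOrder) (D : W -> C) (Dm : forall a b : W, wo_le b a -> hom (D a) (D b)).
Hypothesis Hfs : IsFinalSeqOn H0 H1 W D Dm.

Lemma Dm_irrel (a b : W) p q : Dm a b p = Dm a b q.
Proof. rewrite (proof_irrelevance _ p q). reflexivity. Qed.

Lemma Dm_id (a : W) p : Dm a a p = idm (D a).
Proof. apply (proj1 (proj1 Hfs)). Qed.

Lemma Dm_cmp (a b c : W) p q r : cmp (Dm b c q) (Dm a b p) = Dm a c r.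
Proof. apply (proj2 (proj1 Hfs)). Qed.

Lemma Dm_cmpA (A : C) (a b c : W) p q r (f : hom A (D a)) :
  cmp (Dm b c q) (cmp (Dm a b p) f) = cmp (Dm a c r) f.
Proof. rewrite comp_assoc, (Dm_cmp a b c p q r). reflexivity. Qed.

Lemma min_stage_terminal (a : W) : wo_is_min a -> IsTerminal (D a).
Proof. apply (proj1 (proj2 Hfs)). Qed.

Lemma limit_stage_limit (a : W) : wo_is_limit a -> IsLimitBelow W D Dm a.
Proof. apply (proj2 (proj2 (proj2 Hfs))). Qed.

Definition succ_eq : forall a b : W, wo_is_succ b a -> D a = H0 (D b) :=
  proj1_sig (constructive_indefinite_description _ (proj1 (proj2 (proj2 Hfs)))).

Lemma succ_eq_natural a a' b b' (sa : wo_is_succ a a') (sb : wo_is_succ b b')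
  (p : wo_le b' a') (q : wo_le b a) :
  hcast (succ_eq a' a sa) (succ_eq b' b sb) (Dm a' b' p) = H1 (D a) (D b) (Dm a b q).
Proof. exact (proj2_sig (constructive_indefinite_description _ (proj1 (proj2 (proj2 Hfs))))
  a a' b b' sa sb p q). Qed.

Definition succ_iso (b0 b : W) (s : wo_is_succ b0 b) : hom (H0 (D b0)) (D b) :=
  eq_hom (eq_sym (succ_eq b b0 s)).
Definition succ_iso_inv (b0 b : W) (s : wo_is_succ b0 b) : hom (D b) (H0 (D b0)) :=
  eq_hom (succ_eq b b0 s).

Lemma succ_isoK (b0 b : W) s : cmp (succ_iso b0 b s) (succ_iso_inv b0 b s) = idm (D b).
Proof. apply eq_hom_symK. Qed.

Lemma succ_iso_invK (b0 b : W) s : cmp (succ_iso_inv b0 b s) (succ_iso b0 b s) = idm (H0 (D b0)).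
Proof. apply eq_hom_Ksym. Qed.

Lemma succ_iso_irrel (b0 b : W) s s' : succ_iso b0 b s = succ_iso b0 b s'.
Proof. rewrite (proof_irrelevance _ s s'). reflexivity. Qed.

Lemma Dm_succ_iso (a a' b b' : W) (sa : wo_is_succ a a') (sb : wo_is_succ b b')
  (p : wo_le b' a') (q : wo_le b a) :
  cmp (Dm a' b' p) (succ_iso a a' sa) = cmp (succ_iso b b' sb) (H1 _ _ (Dm a b q)).
Proof.
  rewrite <- (succ_eq_natural a a' b b' sa sb p q), hcast_eq_hom.
  fold (succ_iso a a' sa) (succ_iso_inv b b' sb).
  rewrite !comp_assoc, succ_isoK, comp_idl. reflexivity.
Qed.

Lemma limit_stage_jointly_monic (b : W) : wo_is_limit b ->
  JointlyMonic (fun i : {x : W | wo_lt x b} => D (proj1_sig i))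
    (fun i => Dm b (proj1_sig i) (or_introl (proj2_sig i))).
Proof.
  intros Hl A u v Huv.
  destruct (limit_stage_limit b Hl A (fun x hx => cmp (Dm b x (or_introl hx)) u))
    as [w [_ Hw]].
  { intros x x' hx hx' p. apply Dm_cmpA. }
  rewrite (Hw u (fun _ _ => eq_refl)). symmetry. apply Hw.
  intros x hx. exact (eq_sym (Huv (exist _ x hx))).
Qed.

(* Transfinite induction: minimal stages are terminal, successor stages are the step
   hypothesis, and at limit stages stability bounds the distance by the supremum over
   the earlier stages. *)
Lemma final_seq_mdist_le (A : C) (top : W) (f g : hom A (D top)) (r : R) : 0 <= r ->
  (forall (b b0 : W) (s : wo_is_succ b0 b) (hb : wo_le b top) (hb0 : wo_le b0 top),
     mdist (cmp (Dm top b0 hb0) f) (cmp (Dm top b0 hb0) g) <= r ->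
     mdist (cmp (Dm top b hb) f) (cmp (Dm top b hb) g) <= r) ->
  forall (b : W) (hb : wo_le b top), mdist (cmp (Dm top b hb) f) (cmp (Dm top b hb) g) <= r.
Proof.
  intros Hr Hstep b. induction (wo_wf W b) as [b _ IH]. intros hb.
  destruct (wo_cases W b) as [Hmin|[[b0 Hs]|Hl]].
  - rewrite (proj2 (min_stage_terminal b Hmin) _ _ (cmp (Dm top b hb) g)), mdist_xx.
    assumption.
  - assert (hb0 : wo_le b0 top) by (left; eapply wo_lt_le_trans; [apply Hs | assumption]).
    apply (Hstep b b0 Hs hb hb0), IH, Hs.
  - destruct (wo_not_min_lt W b (proj1 Hl)) as [x0 Hx0].
    destruct (Hstab A (D b) (cmp (Dm top b hb) f) (cmp (Dm top b hb) g) _ _ _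
      (inhabits (exist _ x0 Hx0)) (limit_stage_jointly_monic b Hl)) as [_ Hlub].
    apply Hlub. intros d [[x hx] ->]; simpl.
    assert (hxtop : wo_le x top) by (left; eapply wo_lt_le_trans; eassumption).
    rewrite !(Dm_cmpA _ _ _ _ _ _ hxtop). apply IH; assumption.
Qed.

Lemma final_seq_succ_ext (A : C) (top : W) (f g : hom A (D top)) :
  (forall (b b0 : W) (s : wo_is_succ b0 b) (hb : wo_le b top),
     cmp (Dm top b hb) f = cmp (Dm top b hb) g) -> f = g.
Proof.
  intros Hsucc. apply mdist_le0_eq.
  rewrite <- (comp_idl _ _ _ f), <- (comp_idl _ _ _ g), <- (Dm_id top (wo_le_refl W top)).
  apply final_seq_mdist_le; [lra|].
  intros b b0 s hb hb0 _. rewrite (Hsucc b b0 s hb), mdist_xx. lra.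
Qed.

Definition IsInduced (A : C) (a : hom A (H0 A)) (b : W) (f : hom A (D b)) : Prop :=
  forall (x x0 : W) (s : wo_is_succ x0 x) (hx : wo_le x b) (hx0 : wo_le x0 b),
    cmp (Dm b x hx) f = cmp (succ_iso x0 x s) (cmp (H1 _ _ (cmp (Dm b x0 hx0) f)) a).

Lemma induced_mdist_le (A : C) (a1 a2 : hom A (H0 A)) (b : W) (f1 f2 : hom A (D b)) :
  IsInduced A a1 b f1 -> IsInduced A a2 b f2 -> mdist f1 f2 <= mdist a1 a2.
Proof.
  intros Hf1 Hf2.
  rewrite <- (comp_idl _ _ _ f1), <- (comp_idl _ _ _ f2), <- (Dm_id b (wo_le_refl W b)).
  apply final_seq_mdist_le; [apply mdist_ge0|].
  intros x x0 s hx hx0 IH. rewrite (Hf1 x x0 s hx hx0), (Hf2 x x0 s hx hx0).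
  apply cmp_mdist_le; [rewrite mdist_xx; apply mdist_ge0|].
  apply cmp_mdist_le; [eapply Rle_trans; [apply H1ne | exact IH] | lra].
Qed.

Lemma induced_unique (A : C) (a : hom A (H0 A)) (b : W) (f1 f2 : hom A (D b)) :
  IsInduced A a b f1 -> IsInduced A a b f2 -> f1 = f2.
Proof.
  intros Hf1 Hf2. apply mdist_le0_eq.
  rewrite <- (mdist_xx C _ _ a). exact (induced_mdist_le A a a b f1 f2 Hf1 Hf2).
Qed.

Lemma induced_restrict (A : C) (a : hom A (H0 A)) (b b1 : W) (p : wo_le b1 b) f :
  IsInduced A a b f -> IsInduced A a b1 (cmp (Dm b b1 p) f).
Proof.
  intros Hf x x0 s hx hx0.
  rewrite !(Dm_cmpA _ _ _ _ _ _ (wo_le_trans W _ _ _ hx p)).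
  rewrite !(Dm_cmpA _ _ _ _ _ _ (wo_le_trans W _ _ _ hx0 p)). apply Hf.
Qed.

Section Induced.
Variables (A : C) (a : hom A (H0 A)).

Lemma induced_at_min (b : W) : wo_is_min b -> exists f, IsInduced A a b f.
Proof.
  intros Hmin. destruct (proj1 (min_stage_terminal b Hmin) A) as [f].
  exists f. intros x x0 s hx hx0. exfalso.
  apply (Hmin x0). eapply wo_lt_le_trans; [apply s | exact hx].
Qed.

Lemma induced_at_succ (b0 b : W) (s : wo_is_succ b0 b) (f0 : hom A (D b0)) :
  IsInduced A a b0 f0 -> IsInduced A a b (cmp (succ_iso b0 b s) (cmp (H1 _ _ f0) a)).
Proof.
  intros Hf0. set (f := cmp (succ_iso b0 b s) (cmp (H1 _ _ f0) a)).
  assert (hb0 : wo_le b0 b) by (left; apply s).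
  assert (Hrestr : cmp (Dm b b0 hb0) f = f0).
  { apply final_seq_succ_ext. intros x x0 sx hx.
    assert (hx0 : wo_le x0 b0) by (eapply wo_le_trans; [left; apply sx | exact hx]).
    rewrite (Dm_cmpA _ _ _ _ _ _ (wo_le_trans W _ _ _ hx hb0)), (Hf0 x x0 sx hx hx0).
    unfold f. rewrite comp_assoc, (Dm_succ_iso b0 b x0 x s sx _ hx0), <- !comp_assoc.
    rewrite (comp_assoc _ _ _ _ _ (H1 _ _ _) (H1 _ _ _)), <- H1cmp. reflexivity. }
  intros x x0 sx hx hx0. destruct (proj1 (or_comm _ _) hx) as [-> | Hlt].
  - assert (x0 = b0) by (eapply wo_succ_unique; eassumption). subst x0.
    rewrite Dm_id, comp_idl, (Dm_irrel _ _ hx0 hb0), Hrestr, (succ_iso_irrel _ _ sx s).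
    reflexivity.
  - assert (hx' : wo_le x b0) by (eapply wo_lt_succ; eassumption).
    assert (hx0' : wo_le x0 b0) by (eapply wo_le_trans; [left; apply sx | exact hx']).
    rewrite <- (Dm_cmpA A b b0 x hb0 hx' hx).
    rewrite <- (Dm_cmpA A b b0 x0 hb0 hx0' hx0), Hrestr. apply Hf0.
Qed.

Lemma induced_at_limit (b : W) : wo_is_limit b ->
  (forall x, wo_lt x b -> exists f, IsInduced A a x f) -> exists f, IsInduced A a b f.
Proof.
  intros Hl IH.
  set (g := fun x (hx : wo_lt x b) =>
              proj1_sig (constructive_indefinite_description _ (IH x hx))).
  assert (Hg : forall x hx, IsInduced A a x (g x hx)).
  { intros x hx. exact (proj2_sig (constructive_indefinite_description _ (IH x hx))). }
  assert (Hcone : forall x x' hx hx' (p : wo_le x' x), cmp (Dm x x' p) (g x hx) = g x' hx').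
  { intros x x' hx hx' p. apply (induced_unique A a x'); [apply induced_restrict|]; apply Hg. }
  destruct (limit_stage_limit b Hl A g Hcone) as [u [Hu _]].
  exists u. intros x x0 s hx hx0.
  destruct (proj1 (or_comm _ _) hx) as [-> | Hlt]; [exfalso; exact (proj2 Hl x0 s)|].
  assert (Hlt0 : wo_lt x0 b) by (eapply wo_trans; [apply s | exact Hlt]).
  rewrite (Dm_irrel _ _ hx (or_introl Hlt)), (Dm_irrel _ _ hx0 (or_introl Hlt0)), !Hu.
  rewrite <- (Hcone x x0 Hlt Hlt0 (or_introl (proj1 s))).
  pose proof (Hg x Hlt x x0 s (wo_le_refl W x) (or_introl (proj1 s))) as G.
  rewrite Dm_id, comp_idl in G. exact G.
Qed.

Lemma induced_exists (b : W) : exists f, IsInduced A a b f.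
Proof.
  induction (wo_wf W b) as [b _ IH].
  destruct (wo_cases W b) as [Hmin|[[b0 s]|Hl]].
  - apply induced_at_min, Hmin.
  - destruct (IH b0 (proj1 s)) as [f0 Hf0]. eexists. apply (induced_at_succ b0 b s f0 Hf0).
  - apply induced_at_limit; assumption.
Qed.

End Induced.

Section Converged.
Variables (b b' : W) (sb : wo_is_succ b b') (m' : hom (D b) (D b')).
Hypothesis Hm'm : cmp m' (Dm b' b (or_introl (proj1 sb))) = idm (D b').
Hypothesis Hmm' : cmp (Dm b' b (or_introl (proj1 sb))) m' = idm (D b).

Definition converged_str : hom (D b) (H0 (D b)) := cmp (succ_iso_inv b b' sb) m'.

Lemma converged_morphism_induced (A : C) (a : hom A (H0 A)) (h : hom A (D b)) :
  cmp converged_str h = cmp (H1 _ _ h) a -> IsInduced A a b h.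
Proof.
  unfold converged_str. rewrite <- comp_assoc. intros Eh x x0 s hx hx0.
  assert (hx' : wo_le x b') by (eapply wo_le_trans; [exact hx | left; apply sb]).
  assert (Hback : Dm b x hx = cmp (Dm b' x hx') m').
  { rewrite <- (comp_idr _ _ _ (Dm b x hx)), <- Hmm', comp_assoc, (Dm_cmp _ _ _ _ _ hx').
    reflexivity. }
  rewrite Hback, <- comp_assoc, <- (comp_idl _ _ _ (cmp m' h)), <- (succ_isoK b b' sb).
  rewrite <- comp_assoc, Eh, comp_assoc, (Dm_succ_iso b b' x0 x sb s hx' hx0), <- comp_assoc.
  rewrite (comp_assoc _ _ _ _ _ (H1 _ _ _) (H1 _ _ _)), <- H1cmp. reflexivity.
Qed.

Lemma converged_morphism_exists (A : C) (a : hom A (H0 A)) :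
  exists h, cmp converged_str h = cmp (H1 _ _ h) a.
Proof.
  destruct (induced_exists A a b') as [f Hf].
  exists (cmp (Dm b' b (or_introl (proj1 sb))) f).
  pose proof (Hf b' b sb (wo_le_refl W b') (or_introl (proj1 sb))) as G.
  rewrite Dm_id, comp_idl in G.
  unfold converged_str. rewrite <- comp_assoc, (comp_assoc _ _ _ _ _ m'), Hm'm, comp_idl.
  rewrite G at 1. rewrite comp_assoc, succ_iso_invK, comp_idl. reflexivity.
Qed.

Lemma converged_nonexp_final : IsNonexpFinal H0 H1 (D b) converged_str.
Proof.
  split; [apply converged_morphism_exists|].
  intros A a1 a2 h1 h2 E1 E2.
  apply induced_mdist_le; apply converged_morphism_induced; assumption.
Qed.

End Converged.

End FinalSequence.

Lemma final_seq_converges_nonexp_final (C : MCategory) (H0 : C -> C)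
  (H1 : forall Y Y' : C, hom Y Y' -> hom (H0 Y) (H0 Y')) :
  IsStable C ->
  (forall (Y Y' Y'' : C) (f : hom Y Y') (g : hom Y' Y''),
      H1 Y Y'' (cmp g f) = cmp (H1 Y' Y'' g) (H1 Y Y' f)) ->
  (forall (Y Y' : C) (f g : hom Y Y'), mdist (H1 Y Y' f) (H1 Y Y' g) <= mdist f g) ->
  FinalSeqConverges H0 H1 -> exists (Z : C) (z : hom Z (H0 Z)), IsNonexpFinal H0 H1 Z z.
Proof.
  intros Hstab H1cmp H1ne [W [D [Dm [Hfs [b [b' [sb [m' [Hm'm Hmm']]]]]]]]].
  exists (D b), (converged_str C H0 H1 W D Dm Hfs b b' sb m').
  exact (converged_nonexp_final C Hstab H0 H1 H1cmp H1ne W D Dm Hfs b b' sb m' Hm'm Hmm').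
Qed.

Definition NW : WellOrder :=
  {| wo_car := nat; wo_lt := lt; wo_wf := Wf_nat.lt_wf;
     wo_trans := Nat.lt_trans; wo_total := Nat.lt_total |}.

Lemma NW_leP (b a : nat) : @wo_le NW b a <-> (b <= a)%nat.
Proof. unfold wo_le; simpl. lia. Qed.

Section Tower.
Variable C : MCategory.
Hypothesis Hstab : IsStable C.
Variables (T : C) (HT : IsTerminal T).
Variables (F0 : C -> C) (F1 : forall X Y : C, hom X Y -> hom (F0 Y) (F0 X)).
Hypothesis F1id : forall X : C, F1 X X (idm X) = idm (F0 X).
Hypothesis F1cmp : forall (X Y Z : C) (f : hom X Y) (g : hom Y Z),
  F1 X Z (cmp g f) = cmp (F1 X Y f) (F1 Y Z g).
Variables (c : R) (Hc : 0 <= c < 1).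
Hypothesis F1con : forall (X Y : C) (f g : hom X Y), mdist (F1 X Y f) (F1 X Y g) <= c * mdist f g.
Variables (e0 : hom T (F0 T)) (p0 : hom (F0 T) T).

Lemma to_T_eq (A : C) (f g : hom A T) : f = g.
Proof. apply (proj2 HT). Qed.

Fixpoint stage (n : nat) : C := match n with 0 => T | S n => F0 (stage n) end.

Fixpoint emb_prj (n : nat) : hom (stage n) (stage (S n)) * hom (stage (S n)) (stage n) :=
  match n return hom (stage n) (stage (S n)) * hom (stage (S n)) (stage n) with
  | 0 => (e0, p0)
  | S n => (F1 _ _ (snd (emb_prj n)), F1 _ _ (fst (emb_prj n)))
  end.
Definition emb n := fst (emb_prj n).
Definition prj n := snd (emb_prj n).

(* [conn_pair a b] is the pair (connecting map a -> b, connecting map b -> a); pairing them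
   makes the recursion [conn (S a) (S b) = F1 (conn b a)] structural. *)
Fixpoint conn_pair (a : nat) : forall b, hom (stage a) (stage b) * hom (stage b) (stage a) :=
  match a return forall b, hom (stage a) (stage b) * hom (stage b) (stage a) with
  | 0 => fix up b := match b return hom (stage 0) (stage b) * hom (stage b) (stage 0) with
         | 0 => (idm _, idm _)
         | S b' => (cmp (emb b') (fst (up b')), cmp (snd (up b')) (prj b'))
         end
  | S a' => fun b => match b return hom (stage (S a')) (stage b) * hom (stage b) (stage (S a')) with
         | 0 => (cmp (fst (conn_pair a' 0)) (prj a'), cmp (emb a') (snd (conn_pair a' 0)))
         | S b' => (F1 _ _ (snd (conn_pair a' b')), F1 _ _ (fst (conn_pair a' b')))
         end
  end.
Definition conn a b := fst (conn_pair a b).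

Lemma conn_pair_0S b :
  conn_pair 0 (S b) = (cmp (emb b) (fst (conn_pair 0 b)), cmp (snd (conn_pair 0 b)) (prj b)).
Proof. reflexivity. Qed.

Lemma conn_pair_S0 a :
  conn_pair (S a) 0 = (cmp (fst (conn_pair a 0)) (prj a), cmp (emb a) (snd (conn_pair a 0))).
Proof. reflexivity. Qed.

Lemma conn_pair_SS a b :
  conn_pair (S a) (S b) = (F1 _ _ (snd (conn_pair a b)), F1 _ _ (fst (conn_pair a b))).
Proof. reflexivity. Qed.

Lemma conn_pair_swap a : forall b, snd (conn_pair a b) = conn b a /\ conn a b = snd (conn_pair b a).
Proof.
  unfold conn. induction a as [|a IH]; intros b.
  - induction b as [|b [E1 E2]]; [auto|].
    rewrite conn_pair_0S, conn_pair_S0. cbn [fst snd]. rewrite E1, E2. auto.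
  - destruct b as [|b].
    + clear IH. induction a as [|a [E1 E2]]; [auto|].
      rewrite conn_pair_0S, conn_pair_S0. cbn [fst snd]. rewrite E1, E2. auto.
    + rewrite !conn_pair_SS. cbn [fst snd]. destruct (IH b) as [E1 E2]. rewrite E1, E2. auto.
Qed.

Lemma conn_SS a b : conn (S a) (S b) = F1 _ _ (conn b a).
Proof.
  unfold conn at 1. rewrite conn_pair_SS, (proj1 (conn_pair_swap a b)). reflexivity.
Qed.

Lemma conn_diag a : conn a a = idm (stage a).
Proof. induction a as [|a IH]; [reflexivity|]. rewrite conn_SS, IH. apply F1id. Qed.

Lemma conn_succ n : conn n (S n) = emb n /\ conn (S n) n = prj n.
Proof.
  induction n as [|n [E1 E2]].
  - split; [apply comp_idr | apply comp_idl].
  - rewrite !conn_SS, E1, E2. split; reflexivity.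
Qed.

Lemma prj_emb n : cmp (prj n) (emb n) = idm (stage n).
Proof.
  induction n as [|n IH]; [apply to_T_eq|].
  change (cmp (F1 _ _ (emb n)) (F1 _ _ (prj n)) = idm (stage (S n))).
  rewrite <- F1cmp, IH. apply F1id.
Qed.

Lemma conn_step n : (forall k, (n <= k)%nat -> conn n (S k) = cmp (emb k) (conn n k)) /\
                    (forall a, (n <= a)%nat -> conn (S a) n = cmp (conn a n) (prj a)).
Proof.
  induction n as [|n [IHup IHdown]]; [split; reflexivity|].
  split.
  - intros [|k] Hk; [lia|]. rewrite !conn_SS, (IHdown k ltac:(lia)), F1cmp. reflexivity.
  - intros [|a] Ha; [lia|]. rewrite !conn_SS, (IHup a ltac:(lia)), F1cmp. reflexivity.
Qed.

Lemma conn_up_step n k : (n <= k)%nat -> conn n (S k) = cmp (emb k) (conn n k).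
Proof. apply conn_step. Qed.

Lemma conn_down_step n a : (n <= a)%nat -> conn (S a) n = cmp (conn a n) (prj a).
Proof. apply conn_step. Qed.

Lemma conn_down_cmp a b c0 : (c0 <= b)%nat -> (b <= a)%nat ->
  cmp (conn b c0) (conn a b) = conn a c0.
Proof.
  intros Hcb Hba. replace a with ((a - b) + b)%nat by lia. induction (a - b)%nat as [|d IH].
  - simpl. rewrite conn_diag. apply comp_idr.
  - simpl. rewrite !conn_down_step by lia. rewrite comp_assoc, IH. reflexivity.
Qed.

Lemma conn_emb b j : (b < j)%nat -> cmp (conn (S b) j) (emb b) = conn b j.
Proof.
  intros H. induction j as [|j IH]; [lia|]. destruct (Nat.eq_dec j b) as [->|Hne].
  - rewrite conn_diag, comp_idl. symmetry. apply conn_succ.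
  - rewrite !conn_up_step by lia. rewrite <- comp_assoc, IH by lia. reflexivity.
Qed.

Lemma conn_up_cmp a b j : (a <= b)%nat -> cmp (conn b j) (conn a b) = conn a j.
Proof.
  intros Hab. replace b with ((b - a) + a)%nat by lia. induction (b - a)%nat as [|d IH].
  - simpl. rewrite conn_diag. apply comp_idr.
  - simpl. rewrite conn_up_step, comp_assoc by lia.
    destruct (Nat.le_gt_cases j (d + a)).
    + rewrite conn_down_step by lia.
      rewrite <- (comp_assoc _ _ _ _ _ (conn _ j)), prj_emb, comp_idr. apply IH.
    + rewrite conn_emb by lia. apply IH.
Qed.

Lemma conn_cmp n a b : (b <= a)%nat -> cmp (conn a b) (conn n a) = conn n b.
Proof.
  intros Hba. destruct (Nat.le_gt_cases n a).
  - apply conn_up_cmp; assumption.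
  - apply conn_down_cmp; lia.
Qed.

Lemma emb_prj_approx k : mdist (cmp (emb k) (prj k)) (idm (stage (S k))) <= c ^ k.
Proof.
  induction k as [|k IH]; [apply mdist_le1|].
  change (mdist (cmp (F1 _ _ (prj k)) (F1 _ _ (emb k))) (idm (F0 (stage (S k)))) <= c * c ^ k).
  rewrite <- F1cmp, <- (F1id (stage (S k))).
  eapply Rle_trans; [apply F1con | apply Rmult_le_compat_l; [lra | exact IH]].
Qed.

Lemma conn_roundtrip_approx n k : (n <= k)%nat ->
  mdist (cmp (conn n k) (conn k n)) (idm (stage k)) <= c ^ n.
Proof.
  intros Hnk. replace k with ((k - n) + n)%nat by lia. induction (k - n)%nat as [|d IH].
  - simpl. rewrite conn_diag, comp_idl, mdist_xx. apply pow_le; lra.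
  - simpl. rewrite conn_up_step, conn_down_step by lia.
    apply mdist_trans_le with (g := cmp (emb (d + n)) (prj (d + n))).
    + rewrite <- comp_assoc. apply cmp_mdist_le; [rewrite mdist_xx; apply pow_le; lra|].
      rewrite comp_assoc. rewrite <- (comp_idl _ _ _ (prj (d + n))) at 2.
      apply cmp_mdist_le; [exact IH | rewrite mdist_xx; apply pow_le; lra].
    + eapply Rle_trans; [apply emb_prj_approx | apply pow_le_decr; [lra | lia]].
Qed.

Definition conn_chain (a b : NW) (_ : wo_le b a) : hom (stage a) (stage b) := conn a b.

Lemma conn_chain_chain : IsChain NW stage conn_chain.
Proof.
  split.
  - intros a p. apply conn_diag.
  - intros a b c0 p q r. apply conn_down_cmp; apply NW_leP; assumption.
Qed.

Section TowerLimit.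
Variables (L : C) (pi : forall n : NW, hom L (stage n)).
Hypothesis HL : IsLimitOfChain NW stage conn_chain L pi.

Lemma pi_conn a b : (b <= a)%nat -> cmp (conn a b) (pi a) = pi b.
Proof. intros Hba. exact (proj1 HL a b (proj2 (NW_leP b a) Hba)). Qed.

Lemma pi_jointly_monic (A : C) (u v : hom A L) :
  (forall k, cmp (pi k) u = cmp (pi k) v) -> u = v.
Proof.
  intros Huv. destruct (proj2 HL A (fun k => cmp (pi k) u)) as [w [_ Hw]].
  { intros a b q. rewrite comp_assoc. f_equal. apply (proj1 HL). }
  rewrite (Hw u (fun _ => eq_refl)). symmetry. apply Hw. intros k. symmetry. apply Huv.
Qed.

Lemma cone_factor (A : C) (g : forall n, hom A (stage n)) :
  (forall a b, (b <= a)%nat -> cmp (conn a b) (g a) = g b) ->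
  exists u, forall n, cmp (pi n) u = g n.
Proof.
  intros Hg. destruct (proj2 HL A g) as [u [Hu _]]; [|eauto].
  intros a b q. apply Hg, NW_leP, q.
Qed.

Definition inj (n : nat) : hom (stage n) L :=
  proj1_sig (constructive_indefinite_description _
    (cone_factor (stage n) (conn n) (fun a b Hba => conn_cmp n a b Hba))).

Lemma pi_inj n j : cmp (pi j) (inj n) = conn n j.
Proof. unfold inj. destruct (constructive_indefinite_description _ _) as [i Hi]. apply Hi. Qed.

Lemma inj_conn m n : (m <= n)%nat -> cmp (inj n) (conn m n) = inj m.
Proof.
  intros Hmn. apply pi_jointly_monic. intros j.
  rewrite comp_assoc, !pi_inj. apply conn_up_cmp, Hmn.
Qed.

(* Stability: the distance to the identity is the supremum of the distances after each
   limit projection. *)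
Lemma inj_pi_approx n : mdist (cmp (inj n) (pi n)) (idm L) <= c ^ n.
Proof.
  destruct (Hstab L L (cmp (inj n) (pi n)) (idm L) nat stage pi (inhabits 0%nat)
    pi_jointly_monic) as [_ Hlub].
  apply Hlub. intros r [k ->]. rewrite comp_assoc, pi_inj, comp_idr.
  destruct (Nat.le_gt_cases k n).
  - rewrite pi_conn, mdist_xx by assumption. apply pow_le; lra.
  - rewrite <- (pi_conn k n), comp_assoc by lia.
    rewrite <- (comp_idl _ _ _ (pi k)) at 2.
    eapply Rle_trans; [apply cmp_mdist_l | apply conn_roundtrip_approx; lia].
Qed.

Definition fold_cone (j : nat) : hom (F0 L) (stage j) :=
  match j return hom (F0 L) (stage j) with
  | 0 => cmp (conn 1 0) (F1 _ _ (inj 0))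
  | S j' => F1 _ _ (inj j')
  end.

Lemma fold_cone_cone a b : (b <= a)%nat -> cmp (conn a b) (fold_cone a) = fold_cone b.
Proof.
  intros Hba. destruct b as [|b]; [apply to_T_eq|]. destruct a as [|a]; [lia|].
  simpl. rewrite conn_SS, <- F1cmp, inj_conn by lia. reflexivity.
Qed.

Definition fold_lim : hom (F0 L) L :=
  proj1_sig (constructive_indefinite_description _
    (cone_factor (F0 L) fold_cone fold_cone_cone)).

Lemma pi_fold_lim j : cmp (pi j) fold_lim = fold_cone j.
Proof. unfold fold_lim. destruct (constructive_indefinite_description _ _) as [u Hu]. apply Hu. Qed.

Definition unfold_approx (n : nat) : hom L (F0 L) := cmp (F1 _ _ (pi n)) (pi (S n)).

Lemma unfold_approx_step n : mdist (unfold_approx n) (unfold_approx (S n)) <= c ^ n.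
Proof.
  assert (Hn : unfold_approx n = cmp (F1 _ _ (cmp (emb n) (pi n))) (pi (S (S n)))).
  { unfold unfold_approx.
    rewrite <- (pi_conn (S (S n)) (S n)), conn_SS, (proj1 (conn_succ n)) by lia.
    rewrite comp_assoc, F1cmp. reflexivity. }
  assert (Hemb : mdist (cmp (emb n) (pi n)) (pi (S n)) <= c ^ n).
  { rewrite <- (pi_conn (S n) n), (proj2 (conn_succ n)), comp_assoc by lia.
    rewrite <- (comp_idl _ _ _ (pi (S n))) at 2.
    eapply Rle_trans; [apply cmp_mdist_l | apply emb_prj_approx]. }
  rewrite Hn. unfold unfold_approx.
  eapply Rle_trans; [apply cmp_mdist_l|]. eapply Rle_trans; [apply F1con|].
  eapply Rle_trans; [apply Rmult_contract_le; [exact Hc | apply mdist_ge0] | exact Hemb].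
Qed.

Definition unfold_lim : hom L (F0 L) :=
  proj1_sig (constructive_indefinite_description _
    (geometric_limit_exists C L (F0 L) c Hc unfold_approx unfold_approx_step)).

Lemma unfold_approx_lim n : mdist (unfold_approx n) unfold_lim <= c ^ n.
Proof. unfold unfold_lim. destruct (constructive_indefinite_description _ _) as [l Hl]. apply Hl. Qed.

Lemma fold_unfold_lim : cmp fold_lim unfold_lim = idm L.
Proof.
  apply pi_jointly_monic. intros [|k]; [apply to_T_eq|].
  rewrite comp_idr, comp_assoc, pi_fold_lim.
  change (cmp (F1 _ _ (inj k)) unfold_lim = pi (S k)).
  apply (geometric_limit_unique C L (stage (S k)) c Hc
           (fun n => cmp (F1 _ _ (inj k)) (unfold_approx n)) _ _ k).
  - intros n _. eapply Rle_trans; [apply cmp_mdist_r | apply unfold_approx_lim].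
  - intros n Hn. replace (cmp (F1 _ _ (inj k)) (unfold_approx n))
      with (cmp (conn (S n) (S k)) (pi (S n))).
    + rewrite pi_conn, mdist_xx by lia. apply pow_le; lra.
    + unfold unfold_approx. rewrite conn_SS, comp_assoc, <- F1cmp, pi_inj. reflexivity.
Qed.

Lemma unfold_fold_lim : cmp unfold_lim fold_lim = idm (F0 L).
Proof.
  apply (geometric_limit_unique C (F0 L) (F0 L) c Hc
           (fun n => cmp (unfold_approx n) fold_lim) _ _ 0).
  - intros n _. eapply Rle_trans; [apply cmp_mdist_l | apply unfold_approx_lim].
  - intros n _. replace (cmp (unfold_approx n) fold_lim) with (F1 _ _ (cmp (inj n) (pi n))).
    + rewrite <- (F1id L). eapply Rle_trans; [apply F1con|].
      eapply Rle_trans; [apply Rmult_contract_le; [exact Hc | apply mdist_ge0]|].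
      apply inj_pi_approx.
    + unfold unfold_approx. rewrite F1cmp, <- comp_assoc. f_equal. symmetry. exact (pi_fold_lim (S n)).
Qed.

End TowerLimit.

Lemma contractive_functor_fixpoint : HasChainLimits C ->
  exists (L : C) (phi : hom L (F0 L)) (psi : hom (F0 L) L),
    cmp psi phi = idm L /\ cmp phi psi = idm (F0 L).
Proof.
  intros Hlim. destruct (Hlim NW stage conn_chain conn_chain_chain) as [L [pi HL]].
  exists L, (unfold_lim L pi HL), (fold_lim L pi HL).
  split; [apply fold_unfold_lim | apply unfold_fold_lim].
Qed.

End Tower.

Section LocallyFinal.
Variable C : MCategory.
Variables (B0 : C -> C -> C)
  (B1 : forall X X' Y Y' : C, hom X' X -> hom Y Y' -> hom (B0 X Y) (B0 X' Y')).
Hypothesis Hbif : IsBifunctor B0 B1.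
Variables (c : R) (Hc : 0 <= c < 1).
Hypothesis Hcon : forall (X X' Y : C) (f g : hom X X'),
  mdist (B1 X' X Y Y f (idm Y)) (B1 X' X Y Y g (idm Y)) <= c * mdist f g.
Hypothesis Hne : LocNonExpansiveSnd B0 B1.

Lemma B1_id (X Y : C) : B1 X X Y Y (idm X) (idm Y) = idm (B0 X Y).
Proof. apply Hbif. Qed.

Lemma B1_cmp (X X' X'' Y Y' Y'' : C) (f : hom X' X) (f' : hom X'' X')
  (g : hom Y Y') (g' : hom Y' Y'') :
  B1 X X'' Y Y'' (cmp f f') (cmp g' g) = cmp (B1 X' X'' Y' Y'' f' g') (B1 X X' Y Y' f g).
Proof. apply Hbif. Qed.

Lemma BFix_id (X Y : C) : BFix B0 B1 X Y Y (idm Y) = idm (B0 X Y).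
Proof. apply B1_id. Qed.

Lemma BFix_cmp (X Y Y' Y'' : C) (g : hom Y Y') (g' : hom Y' Y'') :
  BFix B0 B1 X Y Y'' (cmp g' g) = cmp (BFix B0 B1 X Y' Y'' g') (BFix B0 B1 X Y Y' g).
Proof. unfold BFix. rewrite <- B1_cmp, comp_idl. reflexivity. Qed.

Lemma B1_coalg_split (X X' Y Z : C) (f : hom X X') (h : hom Y Z) (y : hom Y (B0 X' Y)) :
  cmp (B1 X' X Y Z f h) y = cmp (BFix B0 B1 X Y Z h) (cmp (B1 X' X Y Y f (idm Y)) y).
Proof. unfold BFix. rewrite comp_assoc, <- B1_cmp, !comp_idr. reflexivity. Qed.

Section Reindex.
Variables (X X' Z : C) (z : hom Z (B0 X Z)).
Hypothesis HZ : IsNonexpFinal (B0 X) (BFix B0 B1 X) Z z.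
Variables (Y : C) (y : hom Y (B0 X' Y)).

Definition reindex (f : hom X X') : hom Y Z :=
  proj1_sig (constructive_indefinite_description _
    (proj1 HZ Y (cmp (B1 X' X Y Y f (idm Y)) y))).

Lemma reindex_spec f : cmp z (reindex f) = cmp (B1 X' X Y Z f (reindex f)) y.
Proof.
  rewrite B1_coalg_split. unfold reindex.
  destruct (constructive_indefinite_description _ _) as [h Hh]. exact Hh.
Qed.

Lemma reindex_unique f h : cmp z h = cmp (B1 X' X Y Z f h) y -> h = reindex f.
Proof.
  intros Eh. apply (nonexp_final_unique _ _ _ Z z Y (cmp (B1 X' X Y Y f (idm Y)) y) _ _ HZ);
    rewrite <- B1_coalg_split; [exact Eh | apply reindex_spec].
Qed.

Lemma reindex_contractive f g : mdist (reindex f) (reindex g) <= c * mdist f g.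
Proof.
  eapply Rle_trans.
  - apply (proj2 HZ Y (cmp (B1 X' X Y Y f (idm Y)) y) (cmp (B1 X' X Y Y g (idm Y)) y));
      rewrite <- B1_coalg_split; apply reindex_spec.
  - eapply Rle_trans; [apply cmp_mdist_l | apply Hcon].
Qed.

End Reindex.

(* Both [k] and the identity are fixed points of the contraction [reindex V V V w HV V w]. *)
Lemma nonexp_final_endo_id (V : C) (w : hom V (B0 V V)) (k : hom V V) :
  IsNonexpFinal (B0 V) (BFix B0 B1 V) V w -> cmp w k = cmp (B1 V V V V k k) w -> k = idm V.
Proof.
  intros HV Ek.
  assert (Eid : cmp w (idm V) = cmp (B1 V V V V (idm V) (idm V)) w)
    by (rewrite B1_id, comp_idl, comp_idr; reflexivity).
  pose proof (reindex_contractive V V V w HV V w k (idm V)) as Hcontr.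
  rewrite <- (reindex_unique V V V w HV V w k k Ek),
          <- (reindex_unique V V V w HV V w (idm V) (idm V) Eid) in Hcontr.
  pose proof (mdist_ge0 C V V k (idm V)). apply mdist_le0_eq. nra.
Qed.

Hypothesis Hstab : IsStable C.
Hypothesis Hconv : forall X : C, FinalSeqConverges (B0 X) (BFix B0 B1 X).

Lemma nonexp_final_exists (X : C) :
  exists (Z : C) (z : hom Z (B0 X Z)), IsNonexpFinal (B0 X) (BFix B0 B1 X) Z z.
Proof.
  apply final_seq_converges_nonexp_final; [exact Hstab | apply BFix_cmp | | apply Hconv].
  intros. apply Hne.
Qed.

Lemma locally_final_nonexp (Z : C) (z : hom Z (B0 Z Z)) :
  IsLocallyFinalCoalgebra B0 B1 Z z -> IsNonexpFinal (B0 Z) (BFix B0 B1 Z) Z z.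
Proof.
  apply final_nonexp_final; [apply BFix_id | apply BFix_cmp | apply nonexp_final_exists].
Qed.

Definition fin_obj (X : C) : C :=
  proj1_sig (constructive_indefinite_description _ (nonexp_final_exists X)).

Definition fin_str (X : C) : hom (fin_obj X) (B0 X (fin_obj X)) :=
  proj1_sig (constructive_indefinite_description _
    (proj2_sig (constructive_indefinite_description _ (nonexp_final_exists X)))).

Lemma fin_nonexp_final (X : C) :
  IsNonexpFinal (B0 X) (BFix B0 B1 X) (fin_obj X) (fin_str X).
Proof.
  exact (proj2_sig (constructive_indefinite_description _
    (proj2_sig (constructive_indefinite_description _ (nonexp_final_exists X))))).
Qed.

Definition fin_map (X X' : C) (f : hom X X') : hom (fin_obj X') (fin_obj X) :=
  reindex X X' (fin_obj X) (fin_str X) (fin_nonexp_final X) (fin_obj X') (fin_str X') f.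

Lemma fin_map_spec (X X' : C) (f : hom X X') :
  cmp (fin_str X) (fin_map X X' f) = cmp (B1 X' X _ _ f (fin_map X X' f)) (fin_str X').
Proof. apply reindex_spec. Qed.

Lemma fin_map_id (X : C) : fin_map X X (idm X) = idm (fin_obj X).
Proof.
  symmetry. apply reindex_unique. rewrite B1_id, comp_idl, comp_idr. reflexivity.
Qed.

Lemma fin_map_cmp (X Y Z : C) (f : hom X Y) (g : hom Y Z) :
  fin_map X Z (cmp g f) = cmp (fin_map X Y f) (fin_map Y Z g).
Proof.
  symmetry. apply reindex_unique.
  rewrite comp_assoc, fin_map_spec, <- comp_assoc, fin_map_spec, comp_assoc, <- B1_cmp.
  reflexivity.
Qed.

Lemma fin_map_contractive (X Y : C) (f g : hom X Y) :
  mdist (fin_map X Y f) (fin_map X Y g) <= c * mdist f g.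
Proof. apply reindex_contractive. Qed.

Lemma locally_final_exists (T : C) : IsTerminal T -> HasChainLimits C ->
  hom T (B0 T T) -> exists (Z : C) (z : hom Z (B0 Z Z)), IsLocallyFinalCoalgebra B0 B1 Z z.
Proof.
  intros HT Hlim b.
  destruct (proj1 (fin_nonexp_final T) T b) as [e0 _].
  destruct (proj1 HT (fin_obj T)) as [p0].
  destruct (contractive_functor_fixpoint C Hstab T HT fin_obj fin_map fin_map_id fin_map_cmp
              c Hc fin_map_contractive e0 p0 Hlim) as [L [phi [psi [Hpsiphi Hphipsi]]]].
  exists L, (cmp (BFix B0 B1 L _ _ psi) (cmp (fin_str L) phi)).
  apply final_coalgebra_transport; [apply BFix_id | apply BFix_cmp | assumption | assumption |].
  apply nonexp_final_final, fin_nonexp_final.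
Qed.

Lemma locally_final_unique : (forall X Y : C, inhabited (hom X Y)) ->
  forall (Z Z' : C) (z : hom Z (B0 Z Z)) (z' : hom Z' (B0 Z' Z')),
    IsLocallyFinalCoalgebra B0 B1 Z z -> IsLocallyFinalCoalgebra B0 B1 Z' z' ->
    exists (i : hom Z Z') (j : hom Z' Z),
      cmp j i = idm Z /\ cmp i j = idm Z' /\ cmp z' i = cmp (B1 Z Z' Z Z' j i) z.
Proof.
  intros Hinh Z Z' z z' Hz Hz'.
  pose proof (locally_final_nonexp Z z Hz) as NZ.
  pose proof (locally_final_nonexp Z' z' Hz') as NZ'.
  set (Psi := reindex Z' Z Z' z' NZ' Z z).
  set (Psi' := reindex Z Z' Z z NZ Z' z').
  destruct (Hinh Z' Z) as [j0].
  destruct (contraction_fixpoint C Z' Z c Hc (fun j => Psi' (Psi j))) as [j Hj];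
    [| exact j0 |].
  { intros f g. eapply Rle_trans; [apply reindex_contractive | apply Rmult_le_compat_l; [lra|]].
    eapply Rle_trans; [apply reindex_contractive|].
    apply Rmult_contract_le; [exact Hc | apply mdist_ge0]. }
  assert (Ei : cmp z' (Psi j) = cmp (B1 Z Z' Z Z' j (Psi j)) z) by apply reindex_spec.
  assert (Ej : cmp z j = cmp (B1 Z' Z Z' Z (Psi j) j) z').
  { rewrite <- Hj at 1 3. apply reindex_spec. }
  exists (Psi j), j. split; [|split; [|exact Ei]].
  - apply (nonexp_final_endo_id Z z _ NZ).
    rewrite comp_assoc, Ej, <- comp_assoc, Ei, comp_assoc, <- B1_cmp. reflexivity.
  - apply (nonexp_final_endo_id Z' z' _ NZ').
    rewrite comp_assoc, Ei, <- comp_assoc, Ej, comp_assoc, <- B1_cmp. reflexivity.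
Qed.

End LocallyFinal.

Theorem theorem4p13 (C : MCategory) (T : C)
  (B0 : C -> C -> C)
  (B1 : forall X X' Y Y' : C, hom X' X -> hom Y Y' -> hom (B0 X Y) (B0 X' Y')) :
  IsStable C -> IsTerminal T -> HasChainLimits C ->
  IsBifunctor B0 B1 ->
  LocContractiveFst B0 B1 -> LocNonExpansiveSnd B0 B1 ->
  inhabited (hom T (B0 T T)) ->
  (forall X : C, FinalSeqConverges (B0 X) (BFix B0 B1 X)) ->
  (exists (Z : C) (z : hom Z (B0 Z Z)), IsLocallyFinalCoalgebra B0 B1 Z z) /\
  ((forall X Y : C, inhabited (hom X Y)) ->
   forall (Z Z' : C) (z : hom Z (B0 Z Z)) (z' : hom Z' (B0 Z' Z')),
     IsLocallyFinalCoalgebra B0 B1 Z z -> IsLocallyFinalCoalgebra B0 B1 Z' z' ->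
     exists (i : hom Z Z') (j : hom Z' Z),
       cmp j i = idm Z /\ cmp i j = idm Z' /\
       cmp z' i = cmp (B1 Z Z' Z Z' j i) z).
Proof.
  intros Hstab HT Hlim Hbif [c [Hc Hcon]] Hne [b] Hconv. split.
  - exact (locally_final_exists C B0 B1 Hbif c Hc Hcon Hne Hstab Hconv T HT Hlim b).
  - exact (locally_final_unique C B0 B1 Hbif c Hc Hcon Hne Hstab Hconv).
Qed.
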